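(* Let $\psi_0(x,t)$ be a classical solution of $\mathrm{i}\psi_t+\tfrac12\psi_{xx}+(|\psi|^2-1)\psi=0$ on $\mathbb{R}^2$, let $\zeta\in\mathbb{C}$, and let $\mathbf{u}^{[a]}(x,t)$, $\mathbf{u}^{[b]}(x,t)$ be (not necessarily distinct) $\mathbb{C}^2$-valued simultaneous solutions of $\mathbf{u}_x=\begin{bmatrix}-\mathrm{i}\zeta&\psi_0\\-\psi_0^*&\mathrm{i}\zeta\end{bmatrix}\mathbf{u}$ and $\mathbf{u}_t=\begin{bmatrix}-\mathrm{i}\zeta^2+\frac{\mathrm{i}}2(|\psi_0|^2-1)&\zeta\psi_0+\frac{\mathrm{i}}2\psi_{0x}\\-\zeta\psi_0^*+\frac{\mathrm{i}}2\psi_{0x}^*&\mathrm{i}\zeta^2-\frac{\mathrm{i}}2(|\psi_0|^2-1)\end{bmatrix}\mathbf{u}$. Then for every $C\in\mathbb{C}$ the function $$\psi_1(x,t)=C\,u^{[a]}_1u^{[b]}_1-C^*\,\big(u^{[a]}_2u^{[b]}_2\big)^*$$ solves the linearized NLS equation $\mathrm{i}\psi_{1t}+\tfrac12\psi_{1xx}+(2|\psi_0|^2-1)\psi_1+\psi_0^2\psi_1^*=0$. In particular $\mu^{[ab]}=u^{[a]}_1u^{[b]}_1-(u^{[a]}_2u^{[b]}_2)^*$ ($C=1$) and $\nu^{[ab]}=\mathrm{i}u^{[a]}_1u^{[b]}_1+\mathrm{i}(u^{[a]}_2u^{[b]}_2)^*$ ($C=\mathrm{i}$) are solutions.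
   Context: $^*$ denotes complex conjugation; $u_j$ denotes the $j$-th component of $\mathbf{u}$. *)

From Stdlib Require Import Reals.
Open Scope R_scope.

Definition Cx : Type := (R * R)%type.
Definition Cre (z : Cx) : R := fst z.
Definition Cim (z : Cx) : R := snd z.
Definition RtoC (a : R) : Cx := (a, 0).
Definition C0 : Cx := (0, 0).
Definition Ci : Cx := (0, 1).
Definition Cadd (z w : Cx) : Cx := (fst z + fst w, snd z + snd w).
Definition Copp (z : Cx) : Cx := (- fst z, - snd z).
Definition Csub (z w : Cx) : Cx := Cadd z (Copp w).
Definition Cmul (z w : Cx) : Cx :=
  (fst z * fst w - snd z * snd w, fst z * snd w + snd z * fst w).
Definition Cconj (z : Cx) : Cx := (fst z, - snd z).
Definition Cabs2 (z : Cx) : Cx := RtoC (fst z * fst z + snd z * snd z).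

Definition has_dx (f g : R -> R -> Cx) : Prop :=
  forall x t,
    derivable_pt_lim (fun s => fst (f s t)) x (fst (g x t)) /\
    derivable_pt_lim (fun s => snd (f s t)) x (snd (g x t)).
Definition has_dt (f g : R -> R -> Cx) : Prop :=
  forall x t,
    derivable_pt_lim (fun s => fst (f x s)) t (fst (g x t)) /\
    derivable_pt_lim (fun s => snd (f x s)) t (snd (g x t)).

Definition NLS_classical (psi psix psixx psit : R -> R -> Cx) : Prop :=
  has_dx psi psix /\ has_dx psix psixx /\ has_dt psi psit /\
  forall x t,
    Cadd (Cadd (Cmul Ci (psit x t)) (Cmul (RtoC (1/2)) (psixx x t)))
         (Cmul (Csub (Cabs2 (psi x t)) (RtoC 1)) (psi x t)) = C0.

Definition lax_solution (zeta : Cx) (psi psix : R -> R -> Cx)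
    (u1 u2 : R -> R -> Cx) : Prop :=
  has_dx u1 (fun x t => Cadd (Cmul (Copp (Cmul Ci zeta)) (u1 x t))
                             (Cmul (psi x t) (u2 x t))) /\
  has_dx u2 (fun x t => Cadd (Cmul (Copp (Cconj (psi x t))) (u1 x t))
                             (Cmul (Cmul Ci zeta) (u2 x t))) /\
  has_dt u1 (fun x t =>
    Cadd (Cmul (Cadd (Copp (Cmul Ci (Cmul zeta zeta)))
                     (Cmul (Cmul Ci (RtoC (1/2)))
                           (Csub (Cabs2 (psi x t)) (RtoC 1)))) (u1 x t))
         (Cmul (Cadd (Cmul zeta (psi x t))
                     (Cmul (Cmul Ci (RtoC (1/2))) (psix x t))) (u2 x t))) /\
  has_dt u2 (fun x t =>
    Cadd (Cmul (Cadd (Copp (Cmul zeta (Cconj (psi x t))))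
                     (Cmul (Cmul Ci (RtoC (1/2))) (Cconj (psix x t)))) (u1 x t))
         (Cmul (Csub (Cmul Ci (Cmul zeta zeta))
                     (Cmul (Cmul Ci (RtoC (1/2)))
                           (Csub (Cabs2 (psi x t)) (RtoC 1)))) (u2 x t))).

Definition LNLS_classical (psi0 psi1 : R -> R -> Cx) : Prop :=
  exists psi1x psi1xx psi1t : R -> R -> Cx,
    has_dx psi1 psi1x /\ has_dx psi1x psi1xx /\ has_dt psi1 psi1t /\
    forall x t,
      Cadd (Cadd (Cadd (Cmul Ci (psi1t x t)) (Cmul (RtoC (1/2)) (psi1xx x t)))
                 (Cmul (Csub (Cmul (RtoC 2) (Cabs2 (psi0 x t))) (RtoC 1)) (psi1 x t)))
           (Cmul (Cmul (psi0 x t) (psi0 x t)) (Cconj (psi1 x t))) = C0.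

(* Write w = u1a u1b, v = u2a u2b and m = u1a u2b + u2a u1b.  The Lax pair
   turns (w, v, m) into a closed linear first-order system,
     w_x = -2i zeta w + psi m,   v_x = 2i zeta v - psi^* m,   m_x = 2 psi v - 2 psi^* w,
   and likewise in t.  Substituting, the m-terms cancel and both F = w and F = v^* satisfy
     i F_t + 1/2 F_xx + (2|psi|^2 - 1) F = psi^2 G^*,
   where G is the other member of the pair {w, v^* }.  The left-hand side is
   C-linear in F, so for psi1 = C w - C^* v^* it equals
   C psi^2 v - C^* psi^2 w^* = - psi^2 psi1^*, which is the linearized equation. *)
From Stdlib Require Import Reals.
Open Scope R_scope.
Set Implicit Arguments.

Ltac Cx_ring :=
  apply injective_projections;
  cbn [Cadd Csub Copp Cmul Cconj Cabs2 RtoC Ci C0 fst snd]; field.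

Definition Cderivable_pt_lim (f : R -> Cx) (s : R) (l : Cx) : Prop :=
  derivable_pt_lim (fun r => fst (f r)) s (fst l) /\
  derivable_pt_lim (fun r => snd (f r)) s (snd l).

Ltac exact_up_to_ring_value H :=
  let H' := fresh in pose proof H as H'; cbv beta in H';
  match type of H' with derivable_pt_lim _ _ ?l =>
  match goal with |- derivable_pt_lim _ _ ?l' =>
    replace l' with l by ring; exact H' end end.

Section ComplexDerivatives.

Variables (f g : R -> Cx) (s : R) (a b : Cx).
Hypotheses (Hf : Cderivable_pt_lim f s a) (Hg : Cderivable_pt_lim g s b).

Lemma Cderivable_pt_lim_const (k : Cx) : Cderivable_pt_lim (fun _ => k) s C0.
Proof. split; apply derivable_pt_lim_const. Qed.

Lemma Cderivable_pt_lim_add :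
  Cderivable_pt_lim (fun r => Cadd (f r) (g r)) s (Cadd a b).
Proof.
  destruct Hf as [Hf1 Hf2], Hg as [Hg1 Hg2].
  split; [exact (derivable_pt_lim_plus _ _ _ _ _ Hf1 Hg1)
         | exact (derivable_pt_lim_plus _ _ _ _ _ Hf2 Hg2)].
Qed.

Lemma Cderivable_pt_lim_sub :
  Cderivable_pt_lim (fun r => Csub (f r) (g r)) s (Csub a b).
Proof.
  destruct Hf as [Hf1 Hf2], Hg as [Hg1 Hg2].
  split; [exact (derivable_pt_lim_minus _ _ _ _ _ Hf1 Hg1)
         | exact (derivable_pt_lim_minus _ _ _ _ _ Hf2 Hg2)].
Qed.

Lemma Cderivable_pt_lim_mul :
  Cderivable_pt_lim (fun r => Cmul (f r) (g r)) s
    (Cadd (Cmul a (g s)) (Cmul (f s) b)).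
Proof.
  destruct Hf as [Hf1 Hf2], Hg as [Hg1 Hg2]; split; cbn [Cadd Cmul fst snd].
  - exact_up_to_ring_value (derivable_pt_lim_minus _ _ _ _ _
      (derivable_pt_lim_mult _ _ _ _ _ Hf1 Hg1) (derivable_pt_lim_mult _ _ _ _ _ Hf2 Hg2)).
  - exact_up_to_ring_value (derivable_pt_lim_plus _ _ _ _ _
      (derivable_pt_lim_mult _ _ _ _ _ Hf1 Hg2) (derivable_pt_lim_mult _ _ _ _ _ Hf2 Hg1)).
Qed.

Lemma Cderivable_pt_lim_conj :
  Cderivable_pt_lim (fun r => Cconj (f r)) s (Cconj a).
Proof.
  destruct Hf as [Hf1 Hf2]; split; [exact Hf1 | exact (derivable_pt_lim_opp _ _ _ Hf2)].
Qed.

End ComplexDerivatives.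

Lemma has_dxE (f g : R -> R -> Cx) :
  has_dx f g <-> forall x t, Cderivable_pt_lim (fun s => f s t) x (g x t).
Proof. reflexivity. Qed.

Lemma has_dt_swap (f g : R -> R -> Cx) :
  has_dt f g <-> has_dx (fun t x => f x t) (fun t x => g x t).
Proof. split; intros H x t; exact (H t x). Qed.

Section PartialDerivativesX.

Variables (f g f' g' : R -> R -> Cx).

Lemma has_dx_ext (h : R -> R -> Cx) :
  has_dx f f' -> (forall x t, f' x t = h x t) -> has_dx f h.
Proof. intros Hf E x t; rewrite <- E; apply Hf. Qed.

Lemma has_dx_const (k : Cx) : has_dx (fun _ _ => k) (fun _ _ => C0).
Proof. intros x t; apply Cderivable_pt_lim_const. Qed.

Lemma has_dx_add : has_dx f f' -> has_dx g g' ->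
  has_dx (fun x t => Cadd (f x t) (g x t)) (fun x t => Cadd (f' x t) (g' x t)).
Proof. rewrite !has_dxE; intros Hf Hg x t; apply Cderivable_pt_lim_add; [apply Hf | apply Hg]. Qed.

Lemma has_dx_sub : has_dx f f' -> has_dx g g' ->
  has_dx (fun x t => Csub (f x t) (g x t)) (fun x t => Csub (f' x t) (g' x t)).
Proof. rewrite !has_dxE; intros Hf Hg x t; apply Cderivable_pt_lim_sub; [apply Hf | apply Hg]. Qed.

Lemma has_dx_mul : has_dx f f' -> has_dx g g' ->
  has_dx (fun x t => Cmul (f x t) (g x t))
    (fun x t => Cadd (Cmul (f' x t) (g x t)) (Cmul (f x t) (g' x t))).
Proof.
  rewrite !has_dxE; intros Hf Hg x t.
  apply (Cderivable_pt_lim_mul (f := fun s => f s t) (g := fun s => g s t)); [apply Hf | apply Hg].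
Qed.

Lemma has_dx_conj : has_dx f f' ->
  has_dx (fun x t => Cconj (f x t)) (fun x t => Cconj (f' x t)).
Proof. rewrite !has_dxE; intros Hf x t; apply Cderivable_pt_lim_conj, Hf. Qed.

End PartialDerivativesX.

Section PartialDerivativesT.

Variables (f g f' g' : R -> R -> Cx).

Lemma has_dt_ext (h : R -> R -> Cx) :
  has_dt f f' -> (forall x t, f' x t = h x t) -> has_dt f h.
Proof. intros Hf E x t; rewrite <- E; apply Hf. Qed.

Lemma has_dt_const (k : Cx) : has_dt (fun _ _ => k) (fun _ _ => C0).
Proof. apply has_dt_swap, has_dx_const. Qed.

Lemma has_dt_sub : has_dt f f' -> has_dt g g' ->
  has_dt (fun x t => Csub (f x t) (g x t)) (fun x t => Csub (f' x t) (g' x t)).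
Proof.
  rewrite !has_dt_swap; apply (has_dx_sub (f := fun t x => f x t) (g := fun t x => g x t)).
Qed.

Lemma has_dt_mul : has_dt f f' -> has_dt g g' ->
  has_dt (fun x t => Cmul (f x t) (g x t))
    (fun x t => Cadd (Cmul (f' x t) (g x t)) (Cmul (f x t) (g' x t))).
Proof.
  rewrite !has_dt_swap; apply (has_dx_mul (f := fun t x => f x t) (g := fun t x => g x t)).
Qed.

Lemma has_dt_conj : has_dt f f' ->
  has_dt (fun x t => Cconj (f x t)) (fun x t => Cconj (f' x t)).
Proof. rewrite !has_dt_swap; apply (has_dx_conj (f := fun t x => f x t)). Qed.

End PartialDerivativesT.

Definition lnls_linear_part (p F Fxx Ft : Cx) : Cx :=
  Cadd (Cadd (Cmul Ci Ft) (Cmul (RtoC (1/2)) Fxx))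
       (Cmul (Csub (Cmul (RtoC 2) (Cabs2 p)) (RtoC 1)) F).

Lemma lnls_linear_part_comb (p c d F Fxx Ft G Gxx Gt : Cx) :
  lnls_linear_part p (Csub (Cmul c F) (Cmul d G)) (Csub (Cmul c Fxx) (Cmul d Gxx))
    (Csub (Cmul c Ft) (Cmul d Gt)) =
  Csub (Cmul c (lnls_linear_part p F Fxx Ft)) (Cmul d (lnls_linear_part p G Gxx Gt)).
Proof. unfold lnls_linear_part; Cx_ring. Qed.

Lemma LNLS_classicalE (psi0 psi1 : R -> R -> Cx) :
  LNLS_classical psi0 psi1 <->
  exists psi1x psi1xx psi1t : R -> R -> Cx,
    has_dx psi1 psi1x /\ has_dx psi1x psi1xx /\ has_dt psi1 psi1t /\
    forall x t,
      Cadd (lnls_linear_part (psi0 x t) (psi1 x t) (psi1xx x t) (psi1t x t))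
           (Cmul (Cmul (psi0 x t) (psi0 x t)) (Cconj (psi1 x t))) = C0.
Proof. reflexivity. Qed.

Section CoupledPairs.

Variable psi : R -> R -> Cx.

Definition lnls_coupled (F G : R -> R -> Cx) : Prop :=
  exists Fx Fxx Ft : R -> R -> Cx,
    has_dx F Fx /\ has_dx Fx Fxx /\ has_dt F Ft /\
    forall x t, lnls_linear_part (psi x t) (F x t) (Fxx x t) (Ft x t) =
                Cmul (Cmul (psi x t) (psi x t)) (Cconj (G x t)).

Lemma LNLS_of_lnls_coupled (F G : R -> R -> Cx) :
  lnls_coupled F G -> lnls_coupled G F -> forall c : Cx,
  LNLS_classical psi (fun x t => Csub (Cmul c (F x t)) (Cmul (Cconj c) (G x t))).
Proof.
  intros [Fx [Fxx [Ft [HFx [HFxx [HFt EF]]]]]] [Gx [Gxx [Gt [HGx [HGxx [HGt EG]]]]]] c.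
  apply LNLS_classicalE.
  exists (fun x t => Csub (Cmul c (Fx x t)) (Cmul (Cconj c) (Gx x t))),
         (fun x t => Csub (Cmul c (Fxx x t)) (Cmul (Cconj c) (Gxx x t))),
         (fun x t => Csub (Cmul c (Ft x t)) (Cmul (Cconj c) (Gt x t))).
  split; [|split; [|split]].
  - apply has_dx_ext with (1 := has_dx_sub (has_dx_mul (has_dx_const c) HFx)
                                           (has_dx_mul (has_dx_const (Cconj c)) HGx)).
    intros x t; Cx_ring.
  - apply has_dx_ext with (1 := has_dx_sub (has_dx_mul (has_dx_const c) HFxx)
                                           (has_dx_mul (has_dx_const (Cconj c)) HGxx)).
    intros x t; Cx_ring.
  - apply has_dt_ext with (1 := has_dt_sub (has_dt_mul (has_dt_const c) HFt)
                                           (has_dt_mul (has_dt_const (Cconj c)) HGt)).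
    intros x t; Cx_ring.
  - intros x t; cbv beta.
    rewrite lnls_linear_part_comb, EF, EG; Cx_ring.
Qed.

End CoupledPairs.

Section SquaredEigenfunctions.

Variables (psi psix : R -> R -> Cx) (zeta : Cx) (ua1 ua2 ub1 ub2 : R -> R -> Cx).
Hypothesis psi_dx : has_dx psi psix.
Hypothesis Ha : lax_solution zeta psi psix ua1 ua2.
Hypothesis Hb : lax_solution zeta psi psix ub1 ub2.

Let T11 x t := Cadd (Copp (Cmul Ci (Cmul zeta zeta)))
  (Cmul (Cmul Ci (RtoC (1/2))) (Csub (Cabs2 (psi x t)) (RtoC 1))).
Let T12 x t := Cadd (Cmul zeta (psi x t)) (Cmul (Cmul Ci (RtoC (1/2))) (psix x t)).
Let T21 x t := Cadd (Copp (Cmul zeta (Cconj (psi x t))))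
  (Cmul (Cmul Ci (RtoC (1/2))) (Cconj (psix x t))).
Let T22 x t := Csub (Cmul Ci (Cmul zeta zeta))
  (Cmul (Cmul Ci (RtoC (1/2))) (Csub (Cabs2 (psi x t)) (RtoC 1))).

Let w x t := Cmul (ua1 x t) (ub1 x t).
Let v x t := Cmul (ua2 x t) (ub2 x t).
Let m x t := Cadd (Cmul (ua1 x t) (ub2 x t)) (Cmul (ua2 x t) (ub1 x t)).

Let two_i_zeta := Cmul (RtoC 2) (Cmul Ci zeta).

Lemma squared_eig_w_dx :
  has_dx w (fun x t => Cadd (Cmul (Copp two_i_zeta) (w x t)) (Cmul (psi x t) (m x t))).
Proof.
  destruct Ha as [Ha1x _], Hb as [Hb1x _].
  apply has_dx_ext with (1 := has_dx_mul Ha1x Hb1x).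
  intros x t; unfold w, m, two_i_zeta; Cx_ring.
Qed.

Lemma squared_eig_v_dx :
  has_dx v (fun x t => Csub (Cmul two_i_zeta (v x t)) (Cmul (Cconj (psi x t)) (m x t))).
Proof.
  destruct Ha as [_ [Ha2x _]], Hb as [_ [Hb2x _]].
  apply has_dx_ext with (1 := has_dx_mul Ha2x Hb2x).
  intros x t; unfold v, m, two_i_zeta; Cx_ring.
Qed.

Lemma squared_eig_m_dx :
  has_dx m (fun x t => Cmul (RtoC 2)
    (Csub (Cmul (psi x t) (v x t)) (Cmul (Cconj (psi x t)) (w x t)))).
Proof.
  destruct Ha as [Ha1x [Ha2x _]], Hb as [Hb1x [Hb2x _]].
  apply has_dx_ext with (1 := has_dx_add (has_dx_mul Ha1x Hb2x) (has_dx_mul Ha2x Hb1x)).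
  intros x t; unfold v, w, m; Cx_ring.
Qed.

Lemma squared_eig_w_dt :
  has_dt w (fun x t => Cadd (Cmul (Cmul (RtoC 2) (T11 x t)) (w x t))
                            (Cmul (T12 x t) (m x t))).
Proof.
  destruct Ha as [_ [_ [Ha1t _]]], Hb as [_ [_ [Hb1t _]]].
  apply has_dt_ext with (1 := has_dt_mul Ha1t Hb1t).
  intros x t; unfold w, m, T11, T12; Cx_ring.
Qed.

Lemma squared_eig_v_dt :
  has_dt v (fun x t => Cadd (Cmul (Cmul (RtoC 2) (T22 x t)) (v x t))
                            (Cmul (T21 x t) (m x t))).
Proof.
  destruct Ha as [_ [_ [_ Ha2t]]], Hb as [_ [_ [_ Hb2t]]].
  apply has_dt_ext with (1 := has_dt_mul Ha2t Hb2t).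
  intros x t; unfold v, m, T21, T22; Cx_ring.
Qed.

Ltac solve_has_dx :=
  solve [ repeat first [ eassumption | apply has_dx_const | apply has_dx_sub
                       | apply has_dx_add | apply has_dx_mul | apply has_dx_conj ] ].

Lemma squared_eig_w_coupled : lnls_coupled psi w (fun x t => Cconj (v x t)).
Proof.
  pose proof squared_eig_w_dx; pose proof squared_eig_m_dx.
  eexists _, _, _; split; [eassumption|]; split; [solve_has_dx|].
  split; [apply squared_eig_w_dt|].
  intros x t; unfold lnls_linear_part, two_i_zeta, T11, T12; Cx_ring.
Qed.

Lemma squared_eig_conj_v_coupled : lnls_coupled psi (fun x t => Cconj (v x t)) w.
Proof.
  pose proof (has_dx_conj squared_eig_v_dx) as conj_v_dx; cbv beta in conj_v_dx.
  pose proof squared_eig_v_dx; pose proof squared_eig_m_dx.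
  eexists _, _, _; split; [eassumption|]; split; [solve_has_dx|].
  split; [apply (has_dt_conj squared_eig_v_dt)|].
  intros x t; unfold lnls_linear_part, two_i_zeta, T21, T22; Cx_ring.
Qed.

End SquaredEigenfunctions.

Theorem mainTheorem13
  (psi0 psi0x psi0xx psi0t : R -> R -> Cx) (zeta : Cx)
  (ua1 ua2 ub1 ub2 : R -> R -> Cx)
  (Hpsi0 : NLS_classical psi0 psi0x psi0xx psi0t)
  (Ha : lax_solution zeta psi0 psi0x ua1 ua2)
  (Hb : lax_solution zeta psi0 psi0x ub1 ub2) :
  forall c : Cx,
    LNLS_classical psi0
      (fun x t => Csub (Cmul c (Cmul (ua1 x t) (ub1 x t)))
                       (Cmul (Cconj c) (Cconj (Cmul (ua2 x t) (ub2 x t))))).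
Proof.
  destruct Hpsi0 as [psi0_dx _].
  apply LNLS_of_lnls_coupled.
  - exact (squared_eig_w_coupled psi0_dx Ha Hb).
  - exact (squared_eig_conj_v_coupled psi0_dx Ha Hb).
Qed.
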